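(* Let $(S_i)_{i\ge1}$ be an ordering of the monic irreducible polynomials of $\mathbb{F}_q[T]$ with $\deg S_i\le\deg S_{i+1}$, let $R_n=\prod_{i=1}^nS_i$, and write uniquely $R_n=\big(\prod_{\deg P\le m_n}P\big)\big(\prod_{i=1}^{r_n}Q_i\big)$ with non-negative integers $m_n,r_n$ and distinct primes $Q_i$ of degree $m_n+1$. Then for all positive integers $n$, $$\log_q\log_q|R_n| = m_n+O(1),$$ and consequently $m_n\ll\log_q\log_q|R_n|$ for all $n$ with $m_n\ge1$, where the implied constant is independent of $q$.
   Context: $q$ is a prime power, $P$ denotes monic irreducible polynomials in $\mathbb{F}_q[T]$, and $|A|=q^{\deg A}$. *)

From Stdlib Require Import Reals.
From mathcomp Require Import all_boot all_order all_algebra all_field.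
Set Implicit Arguments. Unset Strict Implicit. Unset Printing Implicit Defensive.
Import GRing.Theory.
Local Open Scope ring_scope.

(* degree of a polynomial (deg 0 = 0, irrelevant here since we only use nonzero polys) *)
Definition pdeg (F : fieldType) (p : {poly F}) : nat := (size p).-1.

Definition monic_irr (F : fieldType) (p : {poly F}) : Prop :=
  p \is monic /\ irreducible_poly p.

Definition pabs (F : finFieldType) (p : {poly F}) : nat := (#|F| ^ pdeg p)%N.

Definition logq (q : nat) (x : R) : R := Rdiv (ln x) (ln (INR q)).

(* (S_i)_{i >= 1} is an ordering (enumeration without repetition) of all monic
   irreducible polynomials with deg S_i <= deg S_{i+1}.  S 0 is unused. *)
Definition is_prime_ordering (F : finFieldType) (S : nat -> {poly F}) : Prop :=
  [/\ (forall i, (1 <= i)%N -> monic_irr (S i)),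
      (forall i j, (1 <= i)%N -> (1 <= j)%N -> S i = S j -> i = j),
      (forall P, monic_irr P -> exists2 i, (1 <= i)%N & S i = P)
    & (forall i, (1 <= i)%N -> (pdeg (S i) <= pdeg (S i.+1))%N)].

Definition Rprod (F : finFieldType) (S : nat -> {poly F}) (n : nat) : {poly F} :=
  \prod_(1 <= i < n.+1) S i.

(* (m, r, Q, L) is the decomposition R_n = (prod_{deg P <= m} P)(prod_{i=1}^r Q_i):
   L lists (without repetition) exactly the primes of degree <= m,
   Q_1..Q_r (here Q 0 .. Q (r-1)) are distinct primes of degree m+1,
   and r is less than the number of primes of degree m+1 (uniqueness). *)
Definition is_decomp (F : finFieldType) (Rn : {poly F}) (m r : nat)
    (Q : nat -> {poly F}) (L : seq {poly F}) : Prop :=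
  [/\ uniq L /\ (forall P, P \in L <-> (monic_irr P /\ (pdeg P <= m)%N)),
      (forall i, (i < r)%N -> monic_irr (Q i) /\ pdeg (Q i) = m.+1),
      (forall i j, (i < r)%N -> (j < r)%N -> Q i = Q j -> i = j),
      (exists P, [/\ monic_irr P, pdeg P = m.+1 & forall i, (i < r)%N -> Q i <> P])
    & Rn = (\prod_(P <- L) P) * \prod_(i < r) Q i].

(* Since |R_n| = q^(deg R_n), the double logarithm is log_q (deg R_n), so it suffices
   to show q^m <= deg R_n <= q^(m+2).  Lower bound (m >= 1): X^(q^m) - X is separable
   and each of its monic irreducible factors has degree at most m, hence it divides the
   product of all primes of degree <= m, which divides R_n.  Upper bound: R_n is a
   product of distinct primes of degree <= m+1 and a prime P divides X^(q^deg P) - X,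
   so R_n divides prod_(d = 1)^(m+1) (X^(q^d) - X), of degree at most 2 q^(m+1). *)

From Stdlib Require Import Reals Classical Lra.
From mathcomp Require Import all_boot all_order all_algebra all_field.
Set Implicit Arguments. Unset Strict Implicit. Unset Printing Implicit Defensive.
Import GRing.Theory.
Import Pdiv.Field.

Local Open Scope ring_scope.

Section MonicIrreducibleFactors.
Variable F : fieldType.
Implicit Types p f g P Q : {poly F}.

Lemma irredp_scale c p : c != 0 -> irreducible_poly p -> irreducible_poly (c *: p).
Proof.
move=> c0 [sp irr_p]; split; first by rewrite size_scale.
move=> d sd; rewrite dvdpZr // => /(irr_p d sd) dp.
by apply: eqp_trans dp _; rewrite eqp_sym eqp_scale.
Qed.

Lemma monic_irr_factor g : (1 < size g)%N -> exists2 P, monic_irr P & P %| g.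
Proof.
elim: {g}(size g) {-2}g (leqnn (size g)) => [|n IHn] g; first by rewrite leqn0 => /eqP->.
move=> sgn sg1; have g0 : g != 0 by rewrite -size_poly_gt0 ltnW.
have [irr_g | red_g] := classic (irreducible_poly g).
  have lc0 : lead_coef g != 0 by rewrite lead_coef_eq0.
  exists ((lead_coef g)^-1 *: g); last by rewrite dvdpZl ?invr_eq0.
  split; first by apply/monicP; rewrite lead_coefZ mulVf.
  by apply: irredp_scale; rewrite ?invr_eq0.
have [d [sd1 dg ndg]] : exists d : {poly F}, [/\ size d != 1%N, d %| g & ~ d %= g].
  apply: NNPP => no_d; apply: red_g; split=> // d sd dg.
  by apply: NNPP => ndg; apply: no_d; exists d.
have d0 : d != 0 by apply: contraTneq dg => ->; rewrite dvd0p.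
have ltdg : (size d < size g)%N.
  by rewrite ltn_neqAle dvdp_leq // andbT dvdp_size_eqp //; apply/negP.
have sd : (1 < size d)%N by rewrite ltn_neqAle eq_sym sd1 size_poly_gt0.
have [P irrP Pd] := IHn d (leq_trans ltdg sgn) sd.
by exists P => //; apply: dvdp_trans dg.
Qed.

Lemma monic_irr_deg_gt0 P : monic_irr P -> (0 < pdeg P)%N.
Proof. by case=> _ [sP _]; rewrite /pdeg -subn1 subn_gt0. Qed.

Lemma coprimep_monic_irr P Q : monic_irr P -> monic_irr Q -> P != Q -> coprimep P Q.
Proof.
move=> [PM PI] [QM QI]; apply: contraNT => nPQ.
rewrite irreducible_poly_coprime // negbK in nPQ.
by rewrite -eqp_monic // QI // gtn_eqF //; case: PI.
Qed.

Lemma coprimep_prodr P (s : seq {poly F}) :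
  {in s, forall Q, coprimep P Q} -> coprimep P (\prod_(Q <- s) Q).
Proof.
move=> cPs; rewrite big_seq; apply: (big_ind (coprimep P)) => [|a b|] //.
- exact: coprimep1.
- by rewrite coprimepMr => -> ->.
Qed.

Lemma prod_monic_irr_dvdp (s : seq {poly F}) f : uniq s ->
  {in s, forall P, monic_irr P /\ P %| f} -> \prod_(P <- s) P %| f.
Proof.
elim: s => [|P s IHs] /=; first by rewrite big_nil dvd1p.
case/andP=> Ps us Hs; have [irrP Pf] := Hs P (mem_head _ _).
have Hs' : {in s, forall Q, monic_irr Q /\ Q %| f}.
  by move=> Q Qs; apply: Hs; rewrite inE Qs orbT.
rewrite big_cons Gauss_dvdp ?Pf ?IHs //.
apply: coprimep_prodr => Q Qs; apply: coprimep_monic_irr => //; first by case: (Hs' Q Qs).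
by apply: contraNneq Ps => ->.
Qed.

Lemma separable_dvdp_prod g (s : seq {poly F}) : separable_poly g ->
  (forall P, monic_irr P -> P %| g -> P \in s) -> g %| \prod_(P <- s) P.
Proof.
elim: s g => [|P s IHs] g sep_g sub_s.
  rewrite big_nil dvdp1 eqn_leq size_poly_gt0 separable_poly_neq0 // andbT.
  rewrite leqNgt; apply/negP => /monic_irr_factor [P irrP /(sub_s _ irrP)].
  by rewrite in_nil.
have [Pg | nPg] := boolP (P %| g); last first.
  rewrite big_cons dvdp_mull // IHs // => Q irrQ Qg.
  move: (sub_s Q irrQ Qg); rewrite inE => /predU1P [QP | //].
  by rewrite -QP Qg in nPg.
have gE := divpK Pg; set h := g %/ P in gE.
have sep_h : separable_poly h by apply: dvdp_separable sep_g; rewrite -gE dvdp_mulr.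
(* [P] divides the separable [g] only once. *)
have cop_hP : coprimep h P by apply: (separable_coprime sep_g); rewrite gE.
have P0 : P != 0 by apply: contraTneq Pg => ->; rewrite dvd0p separable_poly_neq0.
rewrite -gE big_cons mulrC dvdp_mul2l // IHs // => Q irrQ Qh.
have Qg : Q %| g by rewrite -gE dvdp_mulr.
move: (sub_s Q irrQ Qg); rewrite inE => /predU1P [QP | //].
have [_ [sQ _]] := irrQ; have := coprimep_dvdr Qh cop_hP.
by rewrite QP coprimepp gtn_eqF // -QP.
Qed.

End MonicIrreducibleFactors.

Lemma size_XnsubX (R : nzRingType) n : (1 < n)%N -> size ('X^n - 'X : {poly R}) = n.+1.
Proof. by move=> n1; rewrite size_polyDl ?size_polyXn // size_polyN size_polyX ltnS. Qed.

Lemma subr_dvdp_comp_poly (R : idomainType) (A u v : {poly R}) :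
  u - v %| (A \Po u) - (A \Po v).
Proof.
elim/poly_ind: A => [|A c IHA]; first by rewrite !comp_poly0 subrr dvdp0.
rewrite !comp_polyD !comp_polyM !comp_polyX !comp_polyC opprD addrACA subrr addr0.
have -> : (A \Po u) * u - (A \Po v) * v = ((A \Po u) - (A \Po v)) * u + (A \Po v) * (u - v).
  by rewrite mulrBl mulrBr addrA subrK.
by apply: dvdp_add; [apply: dvdp_mulr | apply: dvdp_mull].
Qed.

Lemma in_qpoly_eq0 (F : fieldType) (P A : {poly F}) : P \is monic -> (1 < size P)%N ->
  (in_qpoly P A == 0) = (P %| A).
Proof.
move=> PM sP; have mE : mk_monic P = P by rewrite /mk_monic PM sP.
apply/eqP/idP => [/val_eqP /= | PA]; first by rewrite mE -Pdiv.IdomainMonic.modpE.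
by apply/val_eqP; rewrite /= mE -Pdiv.IdomainMonic.modpE.
Qed.

Section FiniteField.
Variable F : finFieldType.
Local Notation q := #|F|.

Lemma expn_card_gt1 m : (0 < m)%N -> (1 < q ^ m)%N.
Proof. by move=> m0; rewrite -(expn0 q) ltn_exp2l ?finNzRing_gt1. Qed.

Lemma expf_card_pow (c : F) m : c ^+ (q ^ m)%N = c.
Proof. by elim: m => [|m IHm]; rewrite ?expr1 // expnSr exprM IHm expf_card. Qed.

Lemma pchar_nat_card_pow m : [pchar {poly F}].-nat (q ^ m)%N.
Proof.
have [p _ pcharFp] := finPcharP F.
rewrite (card_pprimeChar pcharFp) -expnM pnatX pnatE ?(pcharf_prime pcharFp) //.
by rewrite pchar_poly pcharFp.
Qed.

Lemma poly_expr_card_pow (A : {poly F}) m : A ^+ (q ^ m)%N = A \Po 'X^(q ^ m)%N.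
Proof.
elim/poly_ind: A => [|A c IHA].
  by rewrite comp_poly0 expr0n expn_eq0 (gtn_eqF (ltnW (finNzRing_gt1 F))).
rewrite exprDn_pchar ?pchar_nat_card_pow // exprMn IHA -rmorphXn /= expf_card_pow.
by rewrite comp_polyD comp_polyM comp_polyX comp_polyC.
Qed.

Lemma natr_card_pow_eq0 m : (0 < m)%N -> (q ^ m)%:R = 0 :> F.
Proof.
move=> m0; have [p _ pcharFp] := finPcharP F.
have k0 : (0 < logn p q)%N.
  by rewrite lt0n; apply: contraTneq (finNzRing_gt1 F) => k0; rewrite (card_pprimeChar pcharFp) k0.
by rewrite (card_pprimeChar pcharFp) -expnM natrX (pcharf0 pcharFp) expr0n muln_eq0 !gtn_eqF.
Qed.

Lemma XqnX_dvdp_exprB (A : {poly F}) m : 'X^(q ^ m) - 'X %| A ^+ (q ^ m)%N - A.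
Proof. by rewrite poly_expr_card_pow -{2}(comp_polyXr A) subr_dvdp_comp_poly. Qed.

Lemma separable_XqnX m : (0 < m)%N -> separable_poly ('X^(q ^ m) - 'X : {poly F}).
Proof.
move=> m0; rewrite unlock derivB derivXn derivX -mulr_natr -polyC_natr.
rewrite natr_card_pow_eq0 // mulr0 sub0r.
by apply: coprimep_dvdl (coprimep1 _); rewrite dvdp1 size_polyN size_poly1.
Qed.

Lemma monic_irr_dvdp_XqX (P : {poly F}) : monic_irr P -> P %| 'X^(q ^ pdeg P) - 'X.
Proof.
move=> [PM PI]; have hI : monic_irreducible_poly P := (PI, PM).
rewrite -in_qpoly_eq0 //; last by case: PI.
rewrite rmorphB rmorphXn /= /pdeg -(card_qfpoly hI).
by rewrite (expf_card ('qX : {poly %/ P with hI})) subrr.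
Qed.

Lemma monic_irr_dvdp_XqnX_deg (P : {poly F}) m : (0 < m)%N -> monic_irr P ->
  P %| 'X^(q ^ m) - 'X -> (pdeg P <= m)%N.
Proof.
move=> m0 [PM PI] PX; have hI : monic_irreducible_poly P := (PI, PM).
have sP : (1 < size P)%N by case: PI.
have qm1 := expn_card_gt1 m0.
have fixK (y : {poly %/ P with hI}) : y ^+ (q ^ m) = y.
  have yE : y = in_qpoly P (y : {poly F}) :> {poly %/ P}.
    by apply: val_inj; symmetry; apply: (in_qpoly_small (size_mk_monic y)).
  apply/eqP; rewrite -subr_eq0 [in X in X - _]yE [in X in _ - X]yE -rmorphXn -rmorphB.
  by rewrite in_qpoly_eq0 // (dvdp_trans PX) ?XqnX_dvdp_exprB.
(* Every element of F[X]/(P) is a root of X^(q^m) - X, which has at most q^m roots. *)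
have := @max_poly_roots _ ('X^(q ^ m) - 'X) (enum {poly %/ P with hI}).
rewrite enum_uniq size_XnsubX // -cardE card_qfpoly ltnS leq_exp2l ?finNzRing_gt1 //.
apply=> //; first by rewrite -size_poly_eq0 size_XnsubX.
by apply/allP => y _; rewrite rootE !hornerE fixK subrr.
Qed.

Definition prod_XqdX (k : nat) : {poly F} := \prod_(1 <= d < k.+1) ('X^(q ^ d) - 'X).

Lemma prod_XqdX_neq0 k : prod_XqdX k != 0.
Proof.
rewrite /prod_XqdX prodf_seq_neq0; apply/allP => d; rewrite mem_index_iota => /andP[d0 _].
by rewrite -size_poly_eq0 size_XnsubX ?expn_card_gt1.
Qed.

Lemma size_prod_XqdX k : (size (prod_XqdX k) <= 2 * q ^ k)%N.
Proof.
elim: k => [|k IHk]; first by rewrite /prod_XqdX big_geq // size_poly1.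
rewrite /prod_XqdX big_nat_recr //= -/(prod_XqdX k).
apply: leq_trans (size_polyMleq _ _) _; rewrite size_XnsubX ?expn_card_gt1 // addnS /=.
rewrite mul2n -addnn leq_add2r (leq_trans IHk) //.
by rewrite expnS leq_mul2r finNzRing_gt1 orbT.
Qed.

Lemma dvdp_prod_XqdX d k : (0 < d <= k)%N -> 'X^(q ^ d) - 'X %| prod_XqdX k.
Proof.
move=> dk; rewrite /prod_XqdX (bigD1_seq d) ?iota_uniq ?dvdp_mulr //.
by rewrite mem_index_iota ltnS.
Qed.

Lemma prod_monic_irr_dvdp_prod_XqdX (s : seq {poly F}) k : uniq s ->
  {in s, forall P, monic_irr P /\ (pdeg P <= k)%N} -> \prod_(P <- s) P %| prod_XqdX k.
Proof.
move=> us Hs; apply: prod_monic_irr_dvdp => // P /Hs [irrP degP]; split=> //.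
apply: dvdp_trans (monic_irr_dvdp_XqX irrP) (dvdp_prod_XqdX _).
by rewrite monic_irr_deg_gt0.
Qed.

Lemma XqnX_dvdp_prod_monic_irr (L : seq {poly F}) m : (0 < m)%N ->
  (forall P, P \in L <-> monic_irr P /\ (pdeg P <= m)%N) ->
  'X^(q ^ m) - 'X %| \prod_(P <- L) P.
Proof.
move=> m0 HL; apply: separable_dvdp_prod; first exact: separable_XqnX.
by move=> P irrP PX; apply/HL; split=> //; apply: monic_irr_dvdp_XqnX_deg PX.
Qed.

Section Decomposition.
Variables (Rn : {poly F}) (m r : nat) (Q : nat -> {poly F}) (L : seq {poly F}).
Hypothesis decompRn : is_decomp Rn m r Q L.

Lemma is_decomp_monic : Rn \is monic.
Proof.
have [[_ HL] HQ _ _ ->] := decompRn.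
rewrite monicMl; last by rewrite big_seq; apply: monic_prod => P /HL [[]].
by apply: monic_prod => i _; case: (HQ i (ltn_ord i)) => [[]].
Qed.

Lemma is_decomp_deg_ge : (0 < m)%N -> (q ^ m <= pdeg Rn)%N.
Proof.
move=> m0; have [[_ HL] _ _ _ RnE] := decompRn.
have : 'X^(q ^ m) - 'X %| Rn.
  by rewrite RnE dvdp_mulr // XqnX_dvdp_prod_monic_irr.
move/(dvdp_leq (monic_neq0 is_decomp_monic)).
rewrite size_XnsubX ?expn_card_gt1 // /pdeg.
by move=> h; rewrite -ltnS (ltn_predK h).
Qed.

Lemma is_decomp_deg_le : (pdeg Rn <= 2 * q ^ m.+1)%N.
Proof.
have [[uL HL] HQ Qinj _ RnE] := decompRn.
pose s := L ++ [seq Q i | i <- iota 0 r].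
have mem_Qs P : P \in [seq Q i | i <- iota 0 r] -> monic_irr P /\ pdeg P = m.+1.
  by case/mapP=> i; rewrite mem_iota => /HQ ? ->.
have Rn_s : Rn = \prod_(P <- s) P.
  by rewrite RnE big_cat big_map -(big_mkord xpredT) /index_iota subn0.
have us : uniq s.
  rewrite cat_uniq uL map_inj_in_uniq ?iota_uniq ?andbT; last first.
    by move=> i j; rewrite !mem_iota; apply: Qinj.
  apply/hasPn => P /mem_Qs [_ degP]; apply/negP => /HL [_].
  by rewrite degP ltnn.
have : Rn %| prod_XqdX m.+1.
  rewrite Rn_s; apply: prod_monic_irr_dvdp_prod_XqdX => // P.
  rewrite mem_cat => /orP [/HL [irrP degP] | /mem_Qs [irrP ->] //].
  by split=> //; apply: leqW.
move/(dvdp_leq (prod_XqdX_neq0 _))/leq_trans/(_ (size_prod_XqdX _)).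
by move=> h; apply: leq_trans (leq_pred _) h.
Qed.

End Decomposition.

Lemma Rprod_deg_gt0 (S : nat -> {poly F}) n : is_prime_ordering S -> (0 < n)%N ->
  (0 < pdeg (Rprod S n))%N.
Proof.
move=> [Sirr _ _ _] n0.
have RM : Rprod S n \is monic.
  rewrite /Rprod big_nat_cond; apply: monic_prod => i /andP[/andP[i1 _] _].
  by case: (Sirr i i1).
have : S 1%N %| Rprod S n by rewrite /Rprod big_ltn // dvdp_mulr.
move/(dvdp_leq (monic_neq0 RM)); have := monic_irr_deg_gt0 (Sirr 1%N isT).
by rewrite /pdeg -!subn1 !subn_gt0 => /leq_trans; apply.
Qed.

Lemma Rprod_deg_bounds (S : nat -> {poly F}) n m r Q L :
  is_prime_ordering S -> (0 < n)%N -> is_decomp (Rprod S n) m r Q L ->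
  (q ^ m <= pdeg (Rprod S n) <= q ^ m.+2)%N.
Proof.
move=> S_ord n0 decompR; apply/andP; split.
  case: m decompR => [|m] decompR; last exact: is_decomp_deg_ge decompR _.
  by rewrite expn0 Rprod_deg_gt0.
apply: leq_trans (is_decomp_deg_le decompR) _.
by rewrite [in X in (_ <= X)%N]expnS leq_mul2r finNzRing_gt1 orbT.
Qed.

End FiniteField.

Local Close Scope ring_scope.
Local Open Scope R_scope.

Lemma INR_expn a b : INR (a ^ b) = INR a ^ b.
Proof. by elim: b => [|b IHb]; rewrite ?expn0 // expnS mulnE mult_INR IHb. Qed.

Section LogBase.
Variable q : nat.
Hypothesis q_gt1 : (1 < q)%N.

Let ln_q_gt0 : 0 < ln (INR q).
Proof. by rewrite -ln_1; apply: ln_increasing; last apply: (lt_INR 1); [lra | apply/ltP]. Qed.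

Lemma logq_pow N : logq q (INR (q ^ N)) = INR N.
Proof.
rewrite /logq INR_expn ln_pow; last by apply: lt_0_INR; apply/ltP; rewrite ltnW.
by field; apply: Rgt_not_eq.
Qed.

Lemma logq_le x y : 0 < x -> x <= y -> logq q x <= logq q y.
Proof.
move=> x0 xy; apply: Rmult_le_compat_r; first by apply/Rlt_le/Rinv_0_lt_compat.
case: (Rle_lt_or_eq_dec _ _ xy) => [lt_xy | <-]; last exact: Rle_refl.
exact/Rlt_le/ln_increasing.
Qed.

Lemma logq_nat_bounds a b N : (q ^ a <= N <= q ^ b)%N ->
  INR a <= logq q (INR N) <= INR b.
Proof.
case/andP=> /leP aN /leP Nb; rewrite -(logq_pow a) -(logq_pow b).
have qa0 : 0 < INR (q ^ a) by apply: lt_0_INR; apply/ltP; rewrite expn_gt0 ltnW.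
have aN' : INR (q ^ a) <= INR N by apply: le_INR.
by split; apply: logq_le => //; [lra | apply: le_INR].
Qed.

End LogBase.

Lemma loglog_Rprod_bounds (F : finFieldType) (S : nat -> {poly F}) n m r Q L :
  is_prime_ordering S -> (0 < n)%N -> is_decomp (Rprod S n) m r Q L ->
  INR m <= logq #|F| (logq #|F| (INR (pabs (Rprod S n)))) <= INR m + 2.
Proof.
move=> S_ord n0 decompR; have q_gt1 : (1 < #|F|)%N := finNzRing_gt1 F.
rewrite /pabs logq_pow //.
have [lo hi] := logq_nat_bounds q_gt1 (Rprod_deg_bounds S_ord n0 decompR).
by rewrite !S_INR in hi; split; lra.
Qed.

Theorem lemma7p6 :
  (exists C : R,
     forall (F : finFieldType) (S : nat -> {poly F}),
       is_prime_ordering S ->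
       forall (n : nat), (1 <= n)%N ->
       forall (m r : nat) (Q : nat -> {poly F}) (L : seq {poly F}),
         is_decomp (Rprod S n) m r Q L ->
         Rle (Rabs (Rminus (logq #|F| (logq #|F| (INR (pabs (Rprod S n))))) (INR m))) C)
  /\
  (exists C : R,
     forall (F : finFieldType) (S : nat -> {poly F}),
       is_prime_ordering S ->
       forall (n : nat), (1 <= n)%N ->
       forall (m r : nat) (Q : nat -> {poly F}) (L : seq {poly F}),
         is_decomp (Rprod S n) m r Q L ->
         (1 <= m)%N ->
         Rle (INR m) (Rmult C (logq #|F| (logq #|F| (INR (pabs (Rprod S n))))))).
Proof.
split.
- exists 2 => F S S_ord n n1 m r Q L decompR.
  have [lo hi] := loglog_Rprod_bounds S_ord n1 decompR.
  by rewrite Rabs_pos_eq; lra.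
- exists 1 => F S S_ord n n1 m r Q L decompR _.
  have [lo _] := loglog_Rprod_bounds S_ord n1 decompR.
  lra.
Qed.
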